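(* Let $\Omega\subset\mathbb{R}^3$ be a domain and $\mathbf{x}=\boldsymbol{\chi}(\mathbf{X})$ a smooth, one-to-one, invertible map of $\Omega$ onto $\omega$, with deformation gradient $F_{iI}=\partial x_i/\partial X_I$, Jacobian $\Lambda=\det\mathbf{F}>0$, and polar decomposition $\mathbf{F}=\mathbf{V}\mathbf{R}$ ($\mathbf{R}$ proper orthogonal, $\mathbf{V}$ symmetric positive definite with $\mathbf{V}^2=\mathbf{F}\mathbf{F}^t$). Suppose the rotation $\mathbf{R}$ is constant. Let $\kappa_0,\rho_0>0$ be constants. Then the normal acoustic fluid with energy density $$E_0=\kappa_0\big(\partial U_I/\partial X_I\big)^2+\rho_0\,\dot{\mathbf{U}}\cdot\dot{\mathbf{U}}\quad\text{in }\Omega$$ is mapped to a metafluid with isotropic inertia, with energy density $$E=\lambda\big(V_{ij}\,\partial u_j/\partial x_i\big)^2+\rho\,\dot{\mathbf{u}}\cdot\dot{\mathbf{u}}\quad\text{in }\omega,\qquad \lambda=\Lambda^{-1}\kappa_0,\quad \rho=\Lambda^{-1}\rho_0,$$ in the sense that these energy densities are equivalent ($E\,\mathrm{d}v=E_0\,\mathrm{d}V$) under the correspondence of displacements $\mathbf{u}=\mathbf{R}\mathbf{U}$. Moreover, the total mass $\int_\omega\rho\,\mathrm{d}v$ of the deformed region equals the total mass $\int_\Omega\rho_0\,\mathrm{d}V$ of $\Omega$.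
   Context: Repeated indices are summed; upper-case indices refer to undeformed coordinates $\mathbf{X}$, lower-case to deformed coordinates $\mathbf{x}$; $\mathrm{d}v=\Lambda\,\mathrm{d}V$. Quantities in $\omega$ are evaluated at $\mathbf{x}=\boldsymbol{\chi}(\mathbf{X})$. *)

From HB Require Import structures.
From mathcomp Require Import all_boot all_order all_algebra.
From mathcomp Require Import all_classical all_reals all_analysis.
Set Implicit Arguments. Unset Strict Implicit. Unset Printing Implicit Defensive.
Import Order.TTheory GRing.Theory Num.Theory.
Import numFieldNormedType.Exports.
Local Open Scope classical_set_scope.
Local Open Scope ring_scope.

(* Points of R^3 are row vectors 'rV[R]_3; component i of a point/vector v is v ord0 i. *)

Definition pd (R : realType) (f : 'rV[R]_3 -> R) (I : 'I_3) (X : 'rV[R]_3) : R :=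
  derive f X (delta_mx ord0 I).

Definition tdot (R : realType) (f : R -> 'rV[R]_3) (t : R) : 'rV[R]_3 :=
  derive f t 1.

Definition defgrad (R : realType) (chi : 'rV[R]_3 -> 'rV[R]_3) (X : 'rV[R]_3)
  : 'M[R]_3 := \matrix_(i < 3, I < 3) pd (fun Y => chi Y ord0 i) I X.

Definition jac (R : realType) (chi : 'rV[R]_3 -> 'rV[R]_3) (X : 'rV[R]_3) : R :=
  \det (defgrad chi X).

Definition sqnorm3 (R : realType) (v : 'rV[R]_3) : R := \sum_(i < 3) (v ord0 i) ^+ 2.

Definition E0 (R : realType) (kappa0 rho0 : R) (U : R -> 'rV[R]_3 -> 'rV[R]_3)
  (t : R) (X : 'rV[R]_3) : R :=
  kappa0 * (\sum_(I < 3) pd (fun Y => U t Y ord0 I) I X) ^+ 2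
  + rho0 * sqnorm3 (tdot (fun s => U s X) t).

Definition Emeta (R : realType) (lam rho : 'rV[R]_3 -> R) (V : 'rV[R]_3 -> 'M[R]_3)
  (u : R -> 'rV[R]_3 -> 'rV[R]_3) (t : R) (x : 'rV[R]_3) : R :=
  lam x * (\sum_(i < 3) \sum_(j < 3) V x i j * pd (fun y => u t y ord0 j) i x) ^+ 2
  + rho x * sqnorm3 (tdot (fun s => u s x) t).

Definition proper_orthogonal (R : realType) (Q : 'M[R]_3) : Prop :=
  Q *m Q^T = 1%:M /\ \det Q = 1.

Definition sym_posdef (R : realType) (V : 'M[R]_3) : Prop :=
  V^T = V /\ forall v : 'rV[R]_3, v != 0 -> 0 < (v *m V *m v^T) ord0 ord0.

Definition borel3 (R : realType) := g_sigma_algebraType (@open 'rV[R]_3).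

From HB Require Import structures.
From mathcomp Require Import all_boot all_order all_algebra.
From mathcomp Require Import all_classical all_reals all_analysis.
From mathcomp Require Import perm ring.
Set Implicit Arguments. Unset Strict Implicit. Unset Printing Implicit Defensive.
Import Order.TTheory GRing.Theory Num.Theory.
Import numFieldNormedType.Exports.
Local Open Scope classical_set_scope.
Local Open Scope ring_scope.

(* Write A = 'J chi X (so F = A^T), B = 'J chiinv (chi X) = A^-1 and C = 'J U X.
   By the chain rule the Jacobian of u = U o chiinv R^T is B C R^T, and with
   V = F R^T the stretched divergence V_ij du_j/dx_i is tr (R A B C R^T) = tr C,
   the divergence of U; orthogonality of R gives |udot| = |Udot|.  Multiplying
   E by Lambda cancels the factors Lambda^-1 in lambda and rho.  Mass
   conservation is the change of variables dv = Lambda dV applied to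
   rho = Lambda^-1 rho0, which is measurable on omega because Lambda o chiinv
   is continuous there. *)

Section Jacobian.
Variable R : realType.

Lemma continuous_mulmxr m n (M : 'M[R]_(m, n)) :
  continuous (mulmxr M : 'rV[R]_m -> 'rV[R]_n).
Proof.
have -> : (mulmxr M : 'rV[R]_m -> 'rV[R]_n) =
    \sum_(i < m) (fun v : 'rV[R]_m => v 0 i *: row i M).
  by apply/funext => v; rewrite fct_sumE /= mulmx_sum_row.
move=> v; apply: (big_ind (fun f : 'rV[R]_m -> 'rV[R]_n => {for v, continuous f})).
- exact: cst_continuous.
- by move=> f g; apply: continuousD.
by move=> i _; apply: continuousZr_tmp; apply: coord_continuous.
Qed.

Lemma differentiable_mulmxr m n (M : 'M[R]_(m, n)) x :
  differentiable (mulmxr M : 'rV[R]_m -> 'rV[R]_n) x.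
Proof. exact/linear_differentiable/continuous_mulmxr. Qed.

Lemma diff_mulmxr m n (M : 'M[R]_(m, n)) x :
  'd (mulmxr M : 'rV[R]_m -> 'rV[R]_n) x = mulmxr M :> ('rV_m -> 'rV_n).
Proof. exact/diff_lin/continuous_mulmxr. Qed.

Lemma jacobian_mulmxr m n (M : 'M[R]_(m, n)) x : 'J (mulmxr M) x = M.
Proof.
by apply/row_matrixP => k; rewrite !rowE /jacobian mul_rV_lin1 diff_mulmxr.
Qed.

Lemma jacobian_comp m n p (f : 'rV[R]_m -> 'rV[R]_n) (g : 'rV[R]_n -> 'rV[R]_p) a :
  differentiable f a -> differentiable g (f a) ->
  'J (g \o f) a = 'J f a *m 'J g (f a).
Proof.
move=> df dg; apply/row_matrixP => k.
by rewrite !rowE /jacobian mulmxA !mul_rV_lin1 /= diff_comp.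
Qed.

Lemma jacobian_left_inverse m n (f : 'rV[R]_m -> 'rV[R]_n) (g : 'rV[R]_n -> 'rV[R]_m) a :
  differentiable f a -> differentiable g (f a) -> (\near a, g (f a) = a) ->
  'J f a *m 'J g (f a) = 1%:M.
Proof.
move=> df dg gfE; rewrite -jacobian_comp //; apply/row_matrixP => k.
rewrite !rowE mulmx1 /jacobian mul_rV_lin1 -deriveE; last exact: differentiable_comp.
by rewrite (near_eq_derive _ gfE) derive_id.
Qed.

Lemma derive_coord (W : normedModType R) m n (f : W -> 'M[R]_(m, n)) a v i j :
  differentiable f a -> 'D_v (fun y => f y i j) a = ('D_v f a) i j.
Proof.
move=> df.
have coord_linear : linear (fun N : 'M[R]_(m, n) => N i j).
  by move=> k A B; rewrite !mxE.
pose c : {linear 'M[R]_(m, n) -> R} :=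
  HB.pack (fun N : 'M[R]_(m, n) => N i j) (GRing.isLinear.Build _ _ _ _ _ coord_linear).
have cc : continuous c by apply: coord_continuous.
have dc x : differentiable c x by apply: linear_differentiable.
rewrite (_ : (fun y => f y i j) = c \o f) // deriveE; last exact: differentiable_comp.
by rewrite diff_comp // diff_lin // deriveE.
Qed.

Lemma pd_jacobian (f : 'rV[R]_3 -> 'rV[R]_3) a i I :
  differentiable f a -> pd (fun Y => f Y ord0 i) I a = 'J f a I i.
Proof.
by move=> df; rewrite /pd derive_coord // deriveEjacobian // -rowE mxE.
Qed.

Lemma derive_mulmxr (W : normedModType R) m n (f : W -> 'rV[R]_m)
    (M : 'M[R]_(m, n)) a v :
  differentiable f a -> 'D_v (fun s => f s *m M) a = 'D_v f a *m M.
Proof.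
move=> df; rewrite (_ : (fun s => f s *m M) = mulmxr M \o f) //.
rewrite deriveE; last exact/differentiable_comp/differentiable_mulmxr.
by rewrite diff_comp ?diff_mulmxr ?deriveE //; apply: differentiable_mulmxr.
Qed.

End Jacobian.

Lemma continuous_det (R : realType) n : continuous (fun M : 'M[R]_n => \det M).
Proof.
have -> : (fun M : 'M[R]_n => \det M) =
    \sum_(s : 'S_n) (fun M : 'M[R]_n => (-1) ^+ s * \prod_i M i (s i)).
  by rewrite fct_sumE.
move=> M; apply: (big_ind (fun f : 'M[R]_n -> R => {for M, continuous f})).
- exact: cst_continuous.
- by move=> f g; apply: continuousD.
move=> s _; apply: continuousM; first exact: cst_continuous.
rewrite -fct_prodE; apply: (big_ind (fun f : 'M[R]_n -> R => {for M, continuous f})).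
- exact: cst_continuous.
- by move=> f g; apply: continuousM.
by move=> i _; apply: coord_continuous.
Qed.

Lemma measurable_fun_open_continuous (R : realType) n (D : set 'rV[R]_n)
    (g : 'rV[R]_n -> R) :
  open D -> {in D, continuous g} ->
  measurable_fun (D : set (g_sigma_algebraType (@open 'rV[R]_n))) g.
Proof.
move=> oD cg; apply: (measurability _ (measurable_realfun.RGenOpens.measurableE R)).
move=> _ [_ [a [b ->]] <-]; apply: sub_sigma_algebra.
rewrite openE => x [Dx gx]; apply: filterI; first by move: oD; rewrite openE; apply.
by apply: (cg x (mem_set Dx)); apply: interval_open.
Qed.

Lemma trace_trmx_mul (R : pzRingType) n (P Q : 'M[R]_n) :
  \tr (P^T *m Q) = \sum_(i < n) \sum_(j < n) P i j * Q i j.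
Proof.
rewrite /mxtrace exchange_big /=; apply: eq_bigr => j _.
by rewrite mxE; apply: eq_bigr => i _; rewrite mxE.
Qed.

Lemma mxtrace_stretch_gradient (R : comUnitRingType) n (A B C V Q : 'M[R]_n) :
  Q *m Q^T = 1%:M -> A *m B = 1%:M -> A^T = V *m Q ->
  \tr (V^T *m (B *m C *m Q^T)) = \tr C.
Proof.
move=> QQT AB AT; have QTQ : Q^T *m Q = 1%:M by apply: mulmx1C.
have -> : V = A^T *m Q^T by rewrite AT -mulmxA QQT mulmx1.
rewrite trmx_mul !trmxK !mulmxA -(mulmxA Q A B) AB mulmx1.
by rewrite mxtrace_mulC mulmxA QTQ mul1mx.
Qed.

Lemma sqnorm3_mulmx_orthogonal (R : realType) (v : 'rV[R]_3) (Q : 'M[R]_3) :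
  Q *m Q^T = 1%:M -> sqnorm3 (v *m Q) = sqnorm3 v.
Proof.
have sqE (w : 'rV[R]_3) : sqnorm3 w = (w *m w^T) ord0 ord0.
  by rewrite /sqnorm3 mxE; apply: eq_bigr => i _; rewrite mxE expr2.
by move=> QQT; rewrite !sqE trmx_mul !mulmxA -(mulmxA v) QQT mulmx1.
Qed.

Lemma Emeta_jac_E0 (R : realType) (chi chiinv : 'rV[R]_3 -> 'rV[R]_3)
    (V : 'rV[R]_3 -> 'M[R]_3) (Rot : 'M[R]_3) (kappa0 rho0 : R)
    (U : R -> 'rV[R]_3 -> 'rV[R]_3) t X :
  differentiable chi X -> differentiable chiinv (chi X) ->
  (\near X, chiinv (chi X) = X) -> jac chi X != 0 ->
  Rot *m Rot^T = 1%:M -> defgrad chi X = V X *m Rot ->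
  differentiable (U t) X -> derivable (fun s => U s X) t 1 ->
  let u := fun t x => U t (chiinv x) *m Rot^T in
  let lam := fun x => (jac chi (chiinv x))^-1 * kappa0 in
  let rho := fun x => (jac chi (chiinv x))^-1 * rho0 in
  Emeta lam rho (fun x => V (chiinv x)) u t (chi X) * jac chi X = E0 kappa0 rho0 U t X.
Proof.
move=> dchi dinv invE jac_neq0 RRT FE dU dUt u lam rho.
have inv : chiinv (chi X) = X by apply: nbhs_singleton invE.
have dUinv : differentiable (U t \o chiinv) (chi X).
  by apply: differentiable_comp; rewrite // inv.
set A := 'J chi X; set B := 'J chiinv (chi X); set C := 'J (U t) X.
have FAT : defgrad chi X = A^T.
  by apply/matrixP => i I; rewrite [LHS]mxE pd_jacobian // [RHS]mxE.
have grad_u i j : pd (fun y => u t y ord0 j) i (chi X) = (B *m C *m Rot^T) i j.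
  rewrite (pd_jacobian _ _ (differentiable_comp dUinv (differentiable_mulmxr Rot^T _))).
  rewrite jacobian_comp ?jacobian_mulmxr //; last exact: differentiable_mulmxr.
  by rewrite jacobian_comp ?inv.
have div_u : \sum_(i < 3) \sum_(j < 3)
    V (chiinv (chi X)) i j * pd (fun y => u t y ord0 j) i (chi X) = \tr C.
  under eq_bigr => i _ do under eq_bigr => j _ do rewrite grad_u.
  rewrite inv -trace_trmx_mul; apply: mxtrace_stretch_gradient => //.
    exact: jacobian_left_inverse.
  by rewrite -FAT.
have div_U : \sum_(I < 3) pd (fun Y => U t Y ord0 I) I X = \tr C.
  by apply: eq_bigr => I _; rewrite pd_jacobian.
have udot : tdot (fun s => u s (chi X)) t = tdot (fun s => U s X) t *m Rot^T.
  by rewrite /tdot /u inv; apply/derive_mulmxr/derivable1_diffP.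
rewrite /Emeta /E0 div_u div_U udot sqnorm3_mulmx_orthogonal ?trmxK //.
  by rewrite /lam /rho inv; field.
by apply: mulmx1C.
Qed.

Lemma total_mass_conserved (R : realType) (Omega : set 'rV[R]_3)
    (chi chiinv : 'rV[R]_3 -> 'rV[R]_3) (rho0 : R)
    (mu : {measure set (borel3 R) -> \bar R}) :
  (forall X, Omega X -> {for X, continuous (defgrad chi)}) ->
  (forall X, Omega X -> chiinv (chi X) = X) ->
  open (chi @` Omega) ->
  (forall x, (chi @` Omega) x -> differentiable chiinv x) ->
  (forall X, Omega X -> 0 < jac chi X) -> 0 <= rho0 ->
  (forall f : 'rV[R]_3 -> R, (forall x, 0 <= f x) ->
     measurable_fun (chi @` Omega : set (borel3 R)) f ->
     (\int[mu]_(x in (chi @` Omega : set (borel3 R))) (f x)%:E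
      = \int[mu]_(X in (Omega : set (borel3 R))) (f (chi X) * jac chi X)%:E)%E) ->
  (\int[mu]_(x in (chi @` Omega : set (borel3 R))) ((jac chi (chiinv x))^-1 * rho0)%:E
   = \int[mu]_(X in (Omega : set (borel3 R))) rho0%:E)%E.
Proof.
move=> cF inv omega_open dinv jac_gt0 rho0_ge0 change_var.
(* The change of variables applies only to integrands that are nonnegative
   everywhere, hence the absolute value. *)
pose rho x := `|jac chi (chiinv x)|^-1 * rho0.
have rho_ge0 x : 0 <= rho x by rewrite mulr_ge0 ?invr_ge0.
have rho_cont : {in chi @` Omega, continuous rho}.
  move=> _ /set_mem [X OX <-].
  have jac_cont : {for chiinv (chi X), continuous (jac chi)}.
    by rewrite inv //; apply: continuous_comp (cF X OX) (@continuous_det R 3 _).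
  have chiinv_cont : {for chi X, continuous chiinv}.
    by apply/differentiable_continuous/dinv; exists X.
  have inv_cont : {for jac chi (chiinv (chi X)), continuous (fun y : R => `|y|^-1 * rho0)}.
    apply: continuousM; last exact: cst_continuous.
    apply: continuousV; last exact: norm_continuous.
    by rewrite inv // normr_eq0 gt_eqF ?jac_gt0.
  exact: continuous_comp (continuous_comp chiinv_cont jac_cont) inv_cont.
transitivity (\int[mu]_(x in (chi @` Omega : set (borel3 R))) (rho x)%:E)%E.
  by apply: eq_integral => _ /set_mem [X OX <-]; rewrite /rho inv // gtr0_norm ?jac_gt0.
rewrite change_var //; last exact: measurable_fun_open_continuous.
apply: eq_integral => X /set_mem OX.
by rewrite /rho inv // gtr0_norm ?jac_gt0 // mulrAC mulVf ?mul1r // gt_eqF ?jac_gt0.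
Qed.

Theorem lemma1 (R : realType) (Omega : set 'rV[R]_3)
  (chi chiinv : 'rV[R]_3 -> 'rV[R]_3) (V : 'rV[R]_3 -> 'M[R]_3) (Rot : 'M[R]_3)
  (kappa0 rho0 : R) (mu : {measure set (borel3 R) -> \bar R}) :
  open Omega -> Omega !=set0 -> connected Omega ->
  (forall X, Omega X -> differentiable chi X) ->
  (forall X, Omega X -> {for X, continuous (defgrad chi)}) ->
  (forall X Y, Omega X -> Omega Y -> chi X = chi Y -> X = Y) ->
  (forall X, Omega X -> chiinv (chi X) = X) ->
  open (chi @` Omega) ->
  (forall x, (chi @` Omega) x -> differentiable chiinv x) ->
  (forall X, Omega X -> 0 < jac chi X) ->
  proper_orthogonal Rot ->
  (forall X, Omega X -> sym_posdef (V X) /\ defgrad chi X = V X *m Rot) ->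
  0 < kappa0 -> 0 < rho0 ->
  (forall f : 'rV[R]_3 -> R, (forall x, 0 <= f x) ->
     measurable_fun (chi @` Omega : set (borel3 R)) f ->
     (\int[mu]_(x in (chi @` Omega : set (borel3 R))) (f x)%:E
      = \int[mu]_(X in (Omega : set (borel3 R))) (f (chi X) * jac chi X)%:E)%E) ->
  (forall U : R -> 'rV[R]_3 -> 'rV[R]_3,
     (forall t X, Omega X -> differentiable (U t) X) ->
     (forall t X, Omega X -> derivable (fun s => U s X) t 1) ->
     let u := fun t x => U t (chiinv x) *m Rot^T in
     let lam := fun x => (jac chi (chiinv x))^-1 * kappa0 in
     let rho := fun x => (jac chi (chiinv x))^-1 * rho0 in
     forall t X, Omega X ->
       Emeta lam rho (fun x => V (chiinv x)) u t (chi X) * jac chi X = E0 kappa0 rho0 U t X)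
  /\
  (\int[mu]_(x in (chi @` Omega : set (borel3 R))) ((jac chi (chiinv x))^-1 * rho0)%:E
   = \int[mu]_(X in (Omega : set (borel3 R))) rho0%:E)%E.
Proof.
move=> Omega_open _ _ dchi cF _ inv omega_open dinv jac_gt0 [RRT _] polar _ rho0_gt0 change_var.
split; last exact: total_mass_conserved (ltW rho0_gt0) change_var.
move=> U dU dUt u lam rho t X OX.
apply: Emeta_jac_E0; rewrite ?gt_eqF ?jac_gt0 ?(proj2 (polar X OX)) //.
- exact: dchi.
- by apply: dinv; exists X.
- by apply: filterS (open_nbhs_nbhs (conj Omega_open OX)) => Y /inv.
- exact: dU.
- exact: dUt.
Qed.
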